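(* $\mathcal{A}_h^{2h}$ is the operator adjoint of $\mathcal{I}_{2h}^{h}$ and is proportional to the left inverse of $\mathcal{I}_{2h}^{h}$: for any $\bm v_h\in\mathbb{R}^{|S_h|}$ and $\bm v_{2h}\in\mathbb{R}^{|S_{2h}|}$, \[ \big(\bm v_h, \mathcal{I}_{2h}^{h}\bm v_{2h}\big)=\big(\mathcal{A}_h^{2h}\bm v_h, \bm v_{2h}\big),\qquad \mathcal{A}_h^{2h}\mathcal{I}_{2h}^{h}\bm v_{2h}=2^d\,\bm v_{2h}, \] where the parentheses denote standard inner products. Furthermore, the stochastic matrices at consecutive levels satisfy \[ P_{2h}=\mathcal{A}_h^{2h}\,P_h\,\mathcal{I}_{2h}^{h}. \]
   Context: Partition $\mathcal{D}=[-1,1]^d$ with uniform spacing $h=1/N$ into bins $\mathcal{D}_{\bm j}(h)=\bigotimes_{k=1}^d[j_kh,(j_k+1)h)$, $\bm j\in N(h)=\{\bm j:-N\le j_k<N\ \forall k\}$, giving a finite state space $S_h$ with $|S_h|=(2/h)^d$; each bin of level $2h$ is the union of $2^d$ bins of level $h$. For a transition density $K(x,y)$ on $\mathbb{R}^d$, the Ulam–Galerkin matrix at level $h$ is $P_h(\bm i,\bm j)=\int_{\mathcal{D}_{\bm i}(h)}\int_{\mathcal{D}_{\bm j}(h)}K(x,y)\,dy\,dx$. The averaging operator $\mathcal{A}_h^{2h}$ maps a vector on level $h$ to level $2h$ by summing the entries of the $2^d$ fine bins contained in each coarse bin; the interpolation operator $\mathcal{I}_{2h}^{h}$ maps a vector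 on level $2h$ to level $h$ by assigning each fine bin the value of the coarse bin containing it. *)

From HB Require Import structures.
From mathcomp Require Import all_boot all_order all_algebra.
From mathcomp Require Import all_classical all_reals all_analysis.
Set Implicit Arguments. Unset Strict Implicit. Unset Printing Implicit Defensive.
Import Order.TTheory GRing.Theory Num.Theory.
Local Open Scope classical_set_scope.
Local Open Scope ring_scope.

(* Level with spacing h = 1/N on D = [-1,1]^d.  A multi-index
   j in N(h) = {j : -N <= j_k < N} is encoded by k = j + N, i.e. by
   a function 'I_d -> 'I_(2N).  So S_h = state N, |S_h| = (2N)^d = (2/h)^d. *)
Definition state (d N : nat) := {ffun 'I_d -> 'I_(N.*2)}.

Definition jidx (d N : nat) (j : state d N) (k : 'I_d) : int :=
  (j k)%:Z - N%:Z.

Definition bin (R : realType) (d N : nat) (j : state d N) : set (d.-tuple R) :=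
  [set x | forall k : 'I_d,
     (jidx j k)%:~R / N%:R <= tnth x k /\ tnth x k < (jidx j k + 1)%:~R / N%:R].

(* fine bin k (level h = 1/(2M)) is contained in coarse bin c (level 2h = 1/M):
   floor(j_k/2) = i_k, i.e. (k_k)/2 = c_k in the shifted encodings *)
Definition in_coarse (d M : nat) (k : state d M.*2) (c : state d M) : bool :=
  [forall i, (k i)./2 == (c i : nat)].

Definition inner (R : nzRingType) (S : finType) (u v : S -> R) : R :=
  \sum_(s : S) u s * v s.

Definition avg (R : nzRingType) (d M : nat) (v : state d M.*2 -> R) :
  state d M -> R :=
  fun c => \sum_(k : state d M.*2 | in_coarse k c) v k.

Definition interp (R : nzRingType) (d M : nat) (w : state d M -> R) :
  state d M.*2 -> R :=
  fun k => \sum_(c : state d M | in_coarse k c) w c.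

Definition avg_mx (R : nzRingType) (d M : nat) (c : state d M) (k : state d M.*2)
  : R := (in_coarse k c)%:R.
Definition interp_mx (R : nzRingType) (d M : nat) (k : state d M.*2)
  (c : state d M) : R := (in_coarse k c)%:R.

(* mu is the Lebesgue measure on R^d: the product of lengths on boxes
   (this characterizes Lebesgue measure on the Borel sets of R^d) *)
Definition is_lebesgue (R : realType) (d : nat)
  (mu : {measure set (d.-tuple R) -> \bar R}) : Prop :=
  forall a b : d.-tuple R, (forall k, tnth a k <= tnth b k) ->
    mu [set x | forall k, tnth a k <= tnth x k /\ tnth x k < tnth b k]
    = (\prod_(k < d) (tnth b k - tnth a k))%:E.

Definition transition_density (R : realType) (d : nat)
  (mu : {measure set (d.-tuple R) -> \bar R})
  (K : d.-tuple R -> d.-tuple R -> R) : Prop :=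
  [/\ forall x y, 0 <= K x y,
      measurable_fun setT (fun p : d.-tuple R * d.-tuple R => K p.1 p.2)
    & forall x, (\int[mu]_y (K x y)%:E = 1)%E].

(* Ulam-Galerkin matrix at level h = 1/N:
   P_h(i,j) = int_{D_i(h)} int_{D_j(h)} K(x,y) dy dx  (a finite nonnegative
   number for a transition density, hence [fine] is harmless) *)
Definition ulam (R : realType) (d : nat)
  (mu : {measure set (d.-tuple R) -> \bar R})
  (K : d.-tuple R -> d.-tuple R -> R) (N : nat) (i j : state d N) : R :=
  fine (\int[mu]_(x in @bin R d N i) \int[mu]_(y in @bin R d N j) (K x y)%:E)%E.

(* Every fine bin lies in exactly one coarse bin, and the coarse bin c is the
   disjoint union of its 2^d children, the fine bins with indices 2c + b for
   b in {0,1}^d.  The first two identities are bookkeeping with finite sums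
   over this parent/child relation.  For the third, additivity of the integral
   over the decomposition, applied in y and then in x, writes each coarse Ulam
   entry as the sum of the fine entries it contains; all of them are finite
   because K(x, .) is a probability density and bins have finite measure. *)

From HB Require Import structures.
From mathcomp Require Import all_boot all_order all_algebra.
From mathcomp Require Import all_classical all_reals all_analysis.
From mathcomp Require Import measurable_realfun.
From mathcomp Require Import zify lra.
Set Implicit Arguments. Unset Strict Implicit.
Import Order.TTheory GRing.Theory Num.Theory.
Local Open Scope ring_scope.

Section children.
Variables d M : nat.

Lemma ltn_double_addb (i : 'I_(M.*2)) (b : bool) : (i.*2 + b < M.*2.*2)%N.
Proof. by have := ltn_ord i; case: b => /=; lia. Qed.

Definition child (c : state d M) (b : {ffun 'I_d -> bool}) : state d M.*2 :=
  [ffun i => Ordinal (ltn_double_addb (c i) (b i))].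

Lemma in_coarseP (k : state d M.*2) (c : state d M) :
  reflect (exists b, k = child c b) (in_coarse k c).
Proof.
apply: (iffP forallP) => [kc | [b ->] i]; last first.
  by rewrite ffunE /=; apply/eqP; case: (b i) => /=; lia.
exists [ffun i => odd (k i)]; apply/ffunP => i; apply/val_inj.
by rewrite !ffunE /= -(eqP (kc i)) addnC odd_double_half.
Qed.

Lemma in_coarse_child (c : state d M) b : in_coarse (child c b) c.
Proof. by apply/in_coarseP; exists b. Qed.

Lemma child_inj (c : state d M) : injective (child c).
Proof.
move=> b b' /ffunP eq_bb'; apply/ffunP => i; have := f_equal val (eq_bb' i).
by rewrite !ffunE /=; case: (b i); case: (b' i) => //=; lia.
Qed.

Lemma in_coarse_functional (k : state d M.*2) (c c' : state d M) :
  in_coarse k c -> in_coarse k c' -> c = c'.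
Proof.
move=> /forallP kc /forallP kc'; apply/ffunP => i; apply/val_inj.
by rewrite /= -(eqP (kc i)) -(eqP (kc' i)).
Qed.

Lemma card_in_coarse (c : state d M) :
  #|[pred k : state d M.*2 | in_coarse k c]| = (2 ^ d)%N.
Proof.
rewrite (@eq_card _ _ (child c @: [set: {ffun 'I_d -> bool}])) => [|k].
  rewrite card_imset ?cardsT ?card_ffun ?card_bool ?card_ord //.
  exact: child_inj.
by rewrite inE; apply/in_coarseP/imsetP => [[b ->] | [b _ ->]]; exists b.
Qed.

End children.

Section transfer_operators.
Variables (R : nzRingType) (d M : nat).

Lemma inner_interp (v : state d M.*2 -> R) (w : state d M -> R) :
  inner v (interp w) = inner (avg v) w.
Proof.
rewrite /inner /interp /avg.
under eq_bigr do rewrite mulr_sumr big_mkcond.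
under [RHS]eq_bigr do rewrite mulr_suml big_mkcond.
rewrite exchange_big; apply: eq_bigr => c _; apply: eq_bigr => k _.
by case: ifP.
Qed.

Lemma avg_interp (w : state d M -> R) :
  avg (interp w) = (fun c => (2 ^ d)%:R * w c).
Proof.
apply: funext => c; rewrite /avg /interp.
rewrite (eq_bigr (fun=> w c)) ?sumr_const ?card_in_coarse ?mulr_natl // => k kc.
rewrite (big_pred1 c) // => c'.
by apply/idP/eqP => [kc' | ->] //; exact: in_coarse_functional kc' kc.
Qed.

Lemma sum_avg_interp_mx (P : state d M.*2 -> state d M.*2 -> R)
    (c c' : state d M) :
  \sum_k \sum_k' avg_mx R c k * P k k' * interp_mx R k' c' =
  \sum_(k | in_coarse k c) \sum_(k' | in_coarse k' c') P k k'.
Proof.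
rewrite [RHS]big_mkcond; apply: eq_bigr => k _; rewrite /avg_mx.
case: (in_coarse k c); last by rewrite big1 // => k' _; rewrite !mul0r.
rewrite [RHS]big_mkcond; apply: eq_bigr => k' _; rewrite /interp_mx mul1r.
by case: (in_coarse k' c'); rewrite ?mulr1 ?mulr0.
Qed.

End transfer_operators.

Local Open Scope classical_set_scope.

Section bins.
Variables (R : realType) (d : nat).

Lemma binP N (N_gt0 : (0 < N)%N) (j : state d N) (x : d.-tuple R) :
  bin j x <-> forall i, (j i)%:R <= (tnth x i + 1) * N%:R /\
                        (tnth x i + 1) * N%:R < (j i)%:R + 1.
Proof.
have N0 : (0 : R) < N%:R by rewrite ltr0n.
have jidxE i : (jidx j i)%:~R = (j i)%:R - N%:R :> R.
  by rewrite /jidx intrD intrN -!pmulrn.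
rewrite /bin /=; split => jx i; have := jx i;
  rewrite intrD jidxE ler_pdivrMr // ltr_pdivlMr //; lra.
Qed.

Lemma bin_unique N (N_gt0 : (0 < N)%N) (j j' : state d N) (x : d.-tuple R) :
  bin j x -> bin j' x -> j = j'.
Proof.
move=> /(binP N_gt0) jx /(binP N_gt0) j'x; apply/ffunP => i; apply/val_inj.
have [jx1 jx2] := jx i; have [j'x1 j'x2] := j'x i.
have : ((j i)%:R : R) < (j' i)%:R + 1 by lra.
have : ((j' i)%:R : R) < (j i)%:R + 1 by lra.
by rewrite !natr1 !ltr_nat !ltnS => ji j'i; apply/eqP; rewrite eqn_leq ji j'i.
Qed.

Section coarse_level.
Variable M : nat.
Hypothesis M_gt0 : (0 < M)%N.

Let M2_gt0 : (0 < M.*2)%N. Proof. by rewrite double_gt0. Qed.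

Let natr_double n : (n.*2)%:R = 2 * n%:R :> R.
Proof. by rewrite -mul2n natrM. Qed.

Lemma bin_child_sub (k : state d M.*2) (c : state d M) :
  in_coarse k c -> @bin R d M.*2 k `<=` bin c.
Proof.
move=> /in_coarseP [b ->] x /(binP M2_gt0) kx; apply/(binP M_gt0) => i.
move: (kx i); rewrite ffunE /= natrD !natr_double.
by case: (b i) => /=; lra.
Qed.

Lemma bin_coarse_cover (c : state d M) (x : d.-tuple R) :
  bin c x -> exists2 k, in_coarse k c & bin k x.
Proof.
move=> /(binP M_gt0) cx.
pose b := [ffun i => (c i)%:R * 2 + 1 <= (tnth x i + 1) * M%:R * 2].
exists (child c b); first exact: in_coarse_child.
apply/(binP M2_gt0) => i; move: (cx i).
rewrite !ffunE /= natrD !natr_double.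
case: (lerP ((c i)%:R * 2 + 1) ((tnth x i + 1) * M%:R * 2));
  by rewrite ?mulr1n ?mulr0n; lra.
Qed.

Lemma patch_bin_coarse (c : state d M) (f : d.-tuple R -> \bar R) x :
  (f \_ (bin c)) x = (\sum_(k | in_coarse k c) (f \_ (bin k)) x)%E.
Proof.
rewrite {1}/patch; case: ifPn => [/set_mem cx | /negP cx].
  have [k0 k0c k0x] := bin_coarse_cover cx.
  rewrite (bigD1 k0) //= big1 ?adde0 => [|k /andP [_ k_neq]].
    by rewrite /patch mem_set.
  rewrite /patch ifF //; apply/negP => /set_mem kx.
  by move/eqP: k_neq; apply; exact: bin_unique M2_gt0 _ _ x kx k0x.
symmetry; apply: big1 => k kc; rewrite /patch ifF //.
apply/negP => /set_mem kx; apply: cx; apply/mem_set.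
exact: bin_child_sub kc _ kx.
Qed.

End coarse_level.

Lemma box_measurable (a b : 'I_d -> R) :
  measurable [set x : d.-tuple R | forall i, a i <= tnth x i /\ tnth x i < b i].
Proof.
have -> : [set x : d.-tuple R | forall i, a i <= tnth x i /\ tnth x i < b i] =
    \bigcap_(i in [set: 'I_d])
      ((fun x : d.-tuple R => tnth x i) @^-1` [set` `[a i, b i[%R]).
  apply/seteqP; split => x /= xab i.
    by move=> _; rewrite /= in_itv /=; apply/andP; exact: xab.
  by have := xab i I; rewrite /= in_itv /= => /andP.
apply: fin_bigcap_measurable; first exact: finite_finset.
move=> i _; rewrite -[X in measurable X]setTI.
by apply: measurable_tnth => //; exact: measurable_itv.
Qed.

Lemma bin_measurable N (j : state d N) : measurable (bin j : set (d.-tuple R)).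
Proof. exact: box_measurable. Qed.

Section lebesgue.
Variable mu : {measure set (d.-tuple R) -> \bar R}.
Hypothesis mu_lebesgue : is_lebesgue mu.

Lemma lebesgue_box_lty (a b : 'I_d -> R) : (forall i, a i <= b i) ->
  (mu [set x | forall i, (a i <= tnth x i)%R /\ (tnth x i < b i)%R] < +oo)%E.
Proof.
move=> ab.
have -> : [set x : d.-tuple R | forall i, a i <= tnth x i /\ tnth x i < b i] =
    [set x | forall i, tnth [tuple a i | i < d] i <= tnth x i /\
                       tnth x i < tnth [tuple b i | i < d] i].
  by apply/funext => x; rewrite /= propeqE; split => xab i; have := xab i;
    rewrite !tnth_mktuple.
by rewrite mu_lebesgue ?ltry // => i; rewrite !tnth_mktuple.
Qed.

Lemma lebesgue_bin_lty N (j : state d N) : (mu (bin j) < +oo)%E.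
Proof.
apply: lebesgue_box_lty => i.
by rewrite ler_wpM2r ?invr_ge0 ?ler0n // ler_int lerDl.
Qed.

Lemma lebesgue_sigma_finite : sigma_finite setT mu.
Proof.
exists (fun n : nat =>
    [set x : d.-tuple R | forall i, - n%:R <= tnth x i /\ tnth x i < n%:R]).
  apply/seteqP; split => // x _.
  have sum_ge0 : 0 <= \sum_j `|tnth x j| by exact: sumr_ge0.
  exists (Num.Def.archi_bound (\sum_j `|tnth x j|)) => // i.
  have := archi_boundP sum_ge0.
  have : `|tnth x i| <= \sum_j `|tnth x j|.
    by rewrite (bigD1 i) //= lerDl sumr_ge0.
  have := ler_norm (tnth x i); have := ler_norm (- tnth x i).
  by rewrite normrN; lra.
move=> n; split; first exact: box_measurable.
by apply: lebesgue_box_lty => i; have : 0 <= n%:R :> R by []; lra.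
Qed.

End lebesgue.

End bins.

(* [mu] carrying the sigma-finite structure that Fubini-Tonelli requires *)
Definition with_sigma_finite d (T : measurableType d) (R : realType)
  (mu : {measure set T -> \bar R}) (mu_sf : sigma_finite setT mu) :
  set T -> \bar R := mu.
HB.instance Definition _ d (T : measurableType d) (R : realType)
  (mu : {measure set T -> \bar R}) (mu_sf : sigma_finite setT mu) :=
  Measure.copy (with_sigma_finite mu_sf) mu.
HB.instance Definition _ d (T : measurableType d) (R : realType)
  (mu : {measure set T -> \bar R}) (mu_sf : sigma_finite setT mu) :=
  Measure_isSigmaFinite.Build d T R (with_sigma_finite mu_sf) mu_sf.

Lemma ge0_integral_sum_pred d (T : measurableType d) (R : realType)
    (mu : {measure set T -> \bar R}) (D : set T) (I : finType) (P : pred I)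
    (f : I -> T -> \bar R) : measurable D ->
  (forall i, measurable_fun D (f i)) -> (forall i x, D x -> 0 <= f i x)%E ->
  (\int[mu]_(x in D) \sum_(i | P i) f i x =
   \sum_(i | P i) \int[mu]_(x in D) f i x)%E.
Proof.
move=> mD mf f_ge0; under eq_integral do rewrite -big_filter.
by rewrite ge0_integral_sum // big_filter.
Qed.

Section integral_coarse.
Variables (R : realType) (d M : nat).
Hypothesis M_gt0 : (0 < M)%N.
Variable mu : {measure set (d.-tuple R) -> \bar R}.

Lemma integral_bin_coarse (c : state d M) (f : d.-tuple R -> \bar R) :
  measurable_fun setT f -> (forall x, 0 <= f x)%E ->
  (\int[mu]_(x in bin c) f x =
   \sum_(k | in_coarse k c) \int[mu]_(x in bin k) f x)%E.
Proof.
move=> mf f_ge0; rewrite integral_mkcond.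
under eq_integral do rewrite (patch_bin_coarse M_gt0).
rewrite ge0_integral_sum_pred //.
- by apply: eq_bigr => k _; rewrite -integral_mkcond.
- move=> k; apply/(measurable_restrictT _ _).1; first exact: bin_measurable.
  exact: measurable_funS mf.
- by move=> k x _; rewrite /patch; case: ifP.
Qed.

End integral_coarse.

Section density.
Variables (R : realType) (d : nat).
Variable mu : {measure set (d.-tuple R) -> \bar R}.
Variable K : d.-tuple R -> d.-tuple R -> R.
Hypothesis K_density : transition_density mu K.

Let K_ge0 x y : 0 <= K x y. Proof. by case: K_density. Qed.

Let measurable_K :
  measurable_fun setT (fun p : d.-tuple R * d.-tuple R => K p.1 p.2).
Proof. by case: K_density. Qed.

Let measurable_Kx x : measurable_fun setT (fun y => (K x y)%:E).
Proof.
apply/measurable_EFinP.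
exact: measurableT_comp measurable_K (pair1_measurable x).
Qed.

Lemma integral_density_ge0 (B : set (d.-tuple R)) x :
  (0 <= \int[mu]_(y in B) (K x y)%:E)%E.
Proof. by apply: integral_ge0 => y _; rewrite lee_fin. Qed.

Lemma integral_density_le1 (B : set (d.-tuple R)) x : measurable B ->
  (\int[mu]_(y in B) (K x y)%:E <= 1)%E.
Proof.
case: K_density => _ _ K1 mB; rewrite -(K1 x).
by apply: ge0_subset_integral => // y _; rewrite lee_fin.
Qed.

Lemma measurable_integral_density (mu_sf : sigma_finite setT mu)
    (B : set (d.-tuple R)) : measurable B ->
  measurable_fun setT (fun x => \int[mu]_(y in B) (K x y)%:E)%E.
Proof.
move=> mB; pose f p := (K p.1 p.2 * \1_B p.2)%:E.
have mf : measurable_fun setT f.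
  apply/measurable_EFinP/measurable_funM => //.
  exact: measurableT_comp (measurable_indic _) measurable_snd.
have f_ge0 p : (0 <= f p)%E by rewrite lee_fin mulr_ge0 ?indicE.
have := @measurable_fun_fubini_tonelli_F _ _ _ _ R
  (with_sigma_finite mu_sf) f mf f_ge0.
congr measurable_fun; apply/funext => x.
rewrite /fubini_F [in RHS]integral_mkcond; apply: eq_integral => y _.
by rewrite /f /patch indicE; case: ifP => _; rewrite ?mulr1 ?mulr0.
Qed.

Lemma iterated_integral_density_fin_num (mu_sf : sigma_finite setT mu)
    (A B : set (d.-tuple R)) :
  measurable A -> measurable B -> (mu A < +oo)%E ->
  (\int[mu]_(x in A) \int[mu]_(y in B) (K x y)%:E)%E \is a fin_num.
Proof.
move=> mA mB muA_lty.
rewrite ge0_fin_numE; last first.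
  by apply: integral_ge0 => x _; exact: integral_density_ge0.
apply: (@le_lt_trans _ _ (\int[mu]_(x in A) cst 1 x)%E); last first.
  by rewrite integral_cst // mul1e.
apply: ge0_le_integral => // [x _ | | x _].
- exact: integral_density_ge0.
- exact: measurable_funS (measurable_integral_density mu_sf mB).
- exact: integral_density_le1.
Qed.

Hypothesis mu_lebesgue : is_lebesgue mu.

Lemma ulam_coarse M (M_gt0 : (0 < M)%N) (c c' : state d M) :
  ulam mu K c c' =
  \sum_(k | in_coarse k c) \sum_(k' | in_coarse k' c') ulam mu K k k'.
Proof.
have mu_sf := lebesgue_sigma_finite mu_lebesgue.
pose I k k' := (\int[mu]_(x in @bin R d M.*2 k)
                  \int[mu]_(y in @bin R d M.*2 k') (K x y)%:E)%E.
have I_fin k k' : I k k' \is a fin_num.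
  exact (iterated_integral_density_fin_num mu_sf (bin_measurable k)
           (bin_measurable k') (lebesgue_bin_lty mu_lebesgue k)).
have split_y x : (\int[mu]_(y in bin c') (K x y)%:E =
    \sum_(k' | in_coarse k' c') \int[mu]_(y in @bin R d M.*2 k') (K x y)%:E)%E.
  by apply: integral_bin_coarse => // y; rewrite lee_fin.
have split_x k' : (\int[mu]_(x in bin c) \int[mu]_(y in @bin R d M.*2 k')
    (K x y)%:E = \sum_(k | in_coarse k c) I k k')%E.
  apply: integral_bin_coarse => // [|x]; last exact: integral_density_ge0.
  exact (measurable_integral_density mu_sf (bin_measurable k')).
rewrite /ulam; under eq_integral => x _ do rewrite split_y.
rewrite ge0_integral_sum_pred => [||k'|k' x _]; first last.
- exact: integral_density_ge0.
- apply: measurable_funS (measurable_integral_density mu_sf _) => //.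
  exact: bin_measurable.
- exact: bin_measurable.
rewrite (eq_bigr _ (fun k' _ => split_x k')) -sum_fine => [|k' _]; last first.
  by apply/sum_fin_numP.
rewrite [RHS]exchange_big; apply: eq_bigr => k' _.
by rewrite -sum_fine.
Qed.

End density.

Theorem lemma2 (R : realType) (d M : nat) (hM : (0 < M)%N) :
  (forall (v : state d M.*2 -> R) (w : state d M -> R),
      inner v (interp w) = inner (avg v) w)
  /\ (forall w : state d M -> R, avg (interp w) = (fun c => (2 ^ d)%:R * w c))
  /\ (forall (mu : {measure set (d.-tuple R) -> \bar R})
             (K : d.-tuple R -> d.-tuple R -> R),
        is_lebesgue mu -> transition_density mu K ->
        forall c c' : state d M,
          ulam mu K c c' =
          \sum_(k : state d M.*2) \sum_(k' : state d M.*2)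
             @avg_mx R d M c k * ulam mu K k k' * @interp_mx R d M k' c').
Proof.
split; first exact: inner_interp.
split; first exact: avg_interp.
move=> mu K mu_lebesgue K_density c c'.
by rewrite sum_avg_interp_mx; exact: ulam_coarse.
Qed.
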